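(* Let $X$ be a compact subset of $K$, or more generally any compact Hausdorff totally disconnected topological space, and let $\{f_n\}_{n\ge0}$ be an orthonormal basis of $C(X,K)$. Then for every positive integer $m$: (1) $\{f_n^{q^m}\}_{n\ge0}$ is an orthonormal basis of $C(X,K)$; (2) $\{f_n^{1/q^m}\}_{n\ge0}$ is an orthonormal basis of $C(X,K_m)$.
   Context: Let $q$ be a prime power, $K=\mathbf{F}_q((T))$ with $T$-adic absolute value $|x|=q^{-v(x)}$. For an integer $m\ge1$, $K_m=K(T^{1/q^m})=\mathbf{F}_q((T^{1/q^m}))$ with the extended absolute value; every element of $K$ has a unique $q^m$-th root in $K_m$, and $f^{1/q^m}$ denotes the pointwise $q^m$-th root $x\mapsto f(x)^{1/q^m}$. For a field $L\in\{K,K_m\}$, $C(X,L)$ is the $L$-Banach space of continuous functions $X\to L$ with sup-norm; a sequence $(g_n)$ in it is an orthonormal basis if every $g$ can be written uniquely as $g=\sum a_ng_n$ with $a_n\in L$, $a_n\to0$, and then $\|g\|=\max|a_n|$. *)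

From HB Require Import structures.
From Stdlib Require Import ZArith Reals Lia ClassicalEpsilon.
From mathcomp Require Import all_boot all_order all_algebra.
From mathcomp Require Import all_classical all_reals all_analysis.

Set Implicit Arguments.
Unset Strict Implicit.
Unset Printing Implicit Defensive.

Import GRing.Theory.

(* Laurent series F((S)) over a finite field F = F_q, q = #|F|.        *)
(*  * K   = F_q((T))            is this type with S = T   (e = 1);      *)
(*  * K_m = F_q((T^{1/q^m}))    is this type with S = T^{1/q^m}         *)
(*                              (e = q^m), K embedded by T |-> S^{q^m}. *)
(* The absolute value with ramification e is |x| = q^{-v(x)/e}, where   *)
(* v(x) is the S-adic valuation; for e = 1 this is the T-adic absolute  *)
(* value of K and for e = q^m its unique extension to K_m.              *)

Section Laurent.
Variable F : finFieldType.

Definition lbounded (c : Z -> F) := exists N : Z, forall k : Z, Z.lt k N -> c k = 0%R.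

Record laurent := Laurent { coef :> Z -> F; coef_lb : lbounded coef }.

Definition lb (a : laurent) : Z :=
  proj1_sig (ClassicalEpsilon.constructive_indefinite_description _ (coef_lb a)).

Lemma lbP (a : laurent) k : Z.lt k (lb a) -> a k = 0%R.
Proof.
rewrite /lb; case: (ClassicalEpsilon.constructive_indefinite_description _ _) => N HN /=.
exact: HN.
Qed.

Lemma lzero_lb : lbounded (fun _ => 0%R).
Proof. by exists Z0. Qed.
Definition lzero := Laurent lzero_lb.

Lemma lone_lb : lbounded (fun k => if Z.eqb k Z0 then 1%R else 0%R).
Proof.
exists Z0 => k Hk; have -> : Z.eqb k Z0 = false by apply/Z.eqb_neq; lia.
by [].
Qed.
Definition lone := Laurent lone_lb.

Lemma ladd_lb (a b : laurent) : lbounded (fun k => (a k + b k)%R).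
Proof.
exists (Z.min (lb a) (lb b)) => k Hk.
by rewrite !lbP ?addr0 //; lia.
Qed.
Definition ladd (a b : laurent) := Laurent (ladd_lb a b).

Lemma lopp_lb (a : laurent) : lbounded (fun k => (- a k)%R).
Proof. by exists (lb a) => k Hk; rewrite lbP ?oppr0. Qed.
Definition lopp (a : laurent) := Laurent (lopp_lb a).

Definition lsub (a b : laurent) := ladd a (lopp b).

(* Cauchy product: (a*b)_k = sum_{i + j = k} a_i b_j, a finite sum since
   only indices i >= lb a, j >= lb b contribute. *)
Definition lmul_coef (a b : laurent) (k : Z) : F :=
  (\sum_(j < (Z.to_nat (Z.sub (Z.sub k (lb a)) (lb b))).+1)
     a (Z.add (lb a) (Z.of_nat j)) * b (Z.sub (Z.sub k (lb a)) (Z.of_nat j)))%R.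

Lemma lmul_lb (a b : laurent) : lbounded (lmul_coef a b).
Proof.
exists (Z.add (lb a) (lb b)) => k Hk; rewrite /lmul_coef big1 // => j _.
by rewrite (lbP (a := b)) ?mulr0 //; lia.
Qed.
Definition lmul (a b : laurent) := Laurent (lmul_lb a b).

Definition lpow (a : laurent) (n : nat) : laurent := iter n (lmul a) lone.

(* Embedding of F((T)) into F((S)) with T = S^e:  sum c_k T^k |-> sum c_k S^{ek} *)
Lemma lembed_lb (e : nat) (a : laurent) :
  lbounded (fun k => if ((0 < e)%N && Z.eqb (Z.modulo k (Z.of_nat e)) Z0)
                     then a (Z.div k (Z.of_nat e)) else 0%R).
Proof.
exists (Z.mul (lb a) (Z.of_nat e)) => k Hk.
case: (0 < e)%N / idP => [e0|] //=.
case: Z.eqb => //; apply: lbP.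
apply: Z.div_lt_upper_bound; first by move/ltP: e0; lia.
lia.
Qed.
Definition lembed (e : nat) (a : laurent) := Laurent (lembed_lb e a).

Definition is_val (a : laurent) (v : Z) :=
  a v <> 0%R /\ forall k, Z.lt k v -> a k = 0%R.

Definition labs (e : nat) (a : laurent) : R :=
  match ClassicalEpsilon.excluded_middle_informative (exists v, is_val a v) with
  | left H => Rpower (INR #|F|)
                (Rdiv (Ropp (IZR (proj1_sig (ClassicalEpsilon.constructive_indefinite_description _ H))))
                      (INR e))
  | right _ => R0
  end.

(* The (unique, as the paper notes) q^m-th root in K_m = F((S)), S^{q^m} = T,
   of an element x of K = F((T)). *)
Definition lroot (m : nat) (x : laurent) : laurent :=
  match ClassicalEpsilon.excluded_middle_informative
          (exists y, lpow y (#|F| ^ m) = lembed (#|F| ^ m) x) with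
  | left H => proj1_sig (ClassicalEpsilon.constructive_indefinite_description _ H)
  | right _ => lzero
  end.

End Laurent.

Section CXL.
Variables (F : finFieldType) (X : topologicalType) (e : nat).
Local Notation L := (laurent F).

Definition lcontinuous (g : X -> L) : Prop :=
  forall (x : X) (eps : R), Rlt R0 eps ->
    nbhs x (fun y : X => Rlt (labs e (lsub (g y) (g x))) eps).

Fixpoint psum (a : nat -> L) (b : nat -> X -> L) (x : X) (M : nat) : L :=
  match M with
  | O => lzero F
  | S M' => ladd (psum a b x M') (lmul (a M') (b M' x))
  end.

Definition null_seq (a : nat -> L) : Prop :=
  forall eps : R, Rlt R0 eps -> exists N, forall n, (N <= n)%N -> Rle (labs e (a n)) eps.

Definition sum_to (g : X -> L) (a : nat -> L) (b : nat -> X -> L) : Prop :=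
  forall eps : R, Rlt R0 eps -> exists N, forall M, (N <= M)%N ->
    forall x, Rle (labs e (lsub (g x) (psum a b x M))) eps.

Definition sup_norm_is (g : X -> L) (M : R) : Prop :=
  is_lub (fun r => exists x, r = labs e (g x)) M.

Definition max_abs_is (a : nat -> L) (M : R) : Prop :=
  (forall n, Rle (labs e (a n)) M) /\ exists n, labs e (a n) = M.

Definition orthonormal_basis (b : nat -> X -> L) : Prop :=
  (forall n, lcontinuous (b n)) /\
  forall g, lcontinuous g ->
    exists a, [/\ null_seq a, sum_to g a b,
               (exists M, max_abs_is a M /\ sup_norm_is g M) &
               forall a', null_seq a' -> sum_to g a' b -> a' = a].

End CXL.

From Pilot Require Import Defs.
From Stdlib Require Import ZArith Reals Lia Lra.
From HB Require Import structures.
From mathcomp Require Import all_boot all_order all_algebra all_field.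
From mathcomp Require Import all_classical all_reals all_analysis zify.

Set Implicit Arguments.
Unset Strict Implicit.
Unset Printing Implicit Defensive.
Import GRing.Theory.
Delimit Scope Z_scope with ZZ.
Delimit Scope R_scope with RR.
Local Open Scope ring_scope.

(* Write q = #|F|.  An element x of F((S)) satisfies |x| <= q^(-K/e) exactly when
   its coefficients vanish below degree K, so every condition defining an
   orthonormal basis of C(X, F((S))) is a statement about valuations that does not
   depend on the normalisation e.  As K_m is F((S)) with S^(q^m) = T, and the
   q^m-th root of sum c_k T^k is sum c_k S^k, part (2) follows.
   For part (1), c^q = c on F, so x^(q^m) is x with T replaced by T^(q^m).  Hence,
   with N = q^m, every g in C(X, K) splits as g = sum_(r < N) T^r g_r^N along the
   residues of degrees modulo N, the g_r being continuous; expanding each g_r in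
   the basis (f_n) and merging the N coefficient sequences in the same way expands
   g in (f_n^N), and orders of vanishing (hence norms) and uniqueness are
   transported by the splitting. *)

Section LaurentRing.
Variable F : finFieldType.
Local Notation L := (laurent F).
Implicit Types (a b c : L) (K k : Z).

Lemma laurent_ext a b : a =1 b -> a = b.
Proof.
case: a b => [ca pa] [cb pb] /= /funext eqab; subst cb.
by rewrite (Prop_irrelevance pa pb).
Qed.

Definition ord_ge a K := forall k, (k < K)%ZZ -> a k = 0.

Lemma ord_geW a K K' : (K' <= K)%ZZ -> ord_ge a K -> ord_ge a K'.
Proof. by move=> leK aK k ltk; apply: aK; lia. Qed.

Lemma ord_ge_lb a : ord_ge a (lb a).
Proof. by move=> k; apply: Defs.lbP. Qed.

Lemma ord_ge_coef_neq0 a K k : ord_ge a K -> a k <> 0 -> (K <= k)%ZZ.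
Proof. by move=> aK; apply: contra_notP => /Z.nle_gt /aK. Qed.

Definition wsum (h : Z -> F) K (n : nat) : F := \sum_(0 <= j < n) h (K + Z.of_nat j)%ZZ.

Lemma wsum_widen (h : Z -> F) K n K' n' :
  (forall i, h i != 0 -> (K <= i < K + Z.of_nat n)%ZZ) ->
  (K' <= K)%ZZ -> (K + Z.of_nat n <= K' + Z.of_nat n')%ZZ ->
  wsum h K n = wsum h K' n'.
Proof.
move=> supp_h leK len.
pose d := Z.to_nat (K - K').
have d1 : (d <= d + n)%N by rewrite leq_addr.
have d2 : (d + n <= n')%N by apply/leP; lia.
have out_h i : ~ (K <= i < K + Z.of_nat n)%ZZ -> h i = 0.
  by move=> iout; apply/eqP; apply: contra_notT iout => /supp_h.
rewrite /wsum [RHS](big_cat_nat (leq0n d) (leq_trans d1 d2)) /=.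
rewrite [X in (_ + X)](big_cat_nat d1 d2) /=.
rewrite [X in X + _]big1_seq ?add0r => [|j]; last first.
  by rewrite mem_index_iota => /andP[_ ltj]; apply: out_h; lia.
rewrite [X in _ + X]big1_seq ?addr0 => [|j]; last first.
  by rewrite mem_index_iota => /andP[lej ltj]; apply: out_h; lia.
rewrite -{1}[d]add0n big_addn addKn; apply: eq_bigr => j _; congr h; lia.
Qed.

Lemma wsum_supp (h : Z -> F) K n K' n' :
  (forall i, h i != 0 ->
     (K <= i < K + Z.of_nat n)%ZZ /\ (K' <= i < K' + Z.of_nat n')%ZZ) ->
  wsum h K n = wsum h K' n'.
Proof.
move=> supp_h.
pose M := Z.min K K'; pose W := Z.to_nat (Z.max (K + Z.of_nat n) (K' + Z.of_nat n') - M).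
rewrite (@wsum_widen h K n M W) ?(@wsum_widen h K' n' M W) //; try lia.
- by move=> i /supp_h[].
- by move=> i /supp_h[].
Qed.

Lemma lmul_coefE a b Ka Kb k : ord_ge a Ka -> ord_ge b Kb ->
  lmul a b k = wsum (fun i => a i * b (k - i)%ZZ) Ka (Z.to_nat (k - Ka - Kb)).+1.
Proof.
move=> aKa bKb.
have -> : lmul a b k = wsum (fun i => a i * b (k - i)%ZZ) (lb a) (Z.to_nat (k - lb a - lb b)).+1.
  by rewrite /= /lmul_coef /wsum big_mkord; apply: eq_bigr => j _; congr (_ * b _); lia.
apply: wsum_supp => i /eqP abi.
have ai : a i <> 0 by move=> ai0; apply: abi; rewrite ai0 mul0r.
have bi : b (k - i)%ZZ <> 0 by move=> bi0; apply: abi; rewrite bi0 mulr0.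
have := ord_ge_coef_neq0 aKa ai; have := ord_ge_coef_neq0 (ord_ge_lb (a := a)) ai.
have := ord_ge_coef_neq0 bKb bi; have := ord_ge_coef_neq0 (ord_ge_lb (a := b)) bi.
lia.
Qed.

Lemma ord_ge_lmul a b Ka Kb : ord_ge a Ka -> ord_ge b Kb -> ord_ge (lmul a b) (Ka + Kb)%ZZ.
Proof.
move=> aKa bKb k ltk; rewrite (lmul_coefE _ aKa bKb) /wsum big1_seq // => j _.
have [ltj|lej] := Z.lt_ge_cases (Ka + Z.of_nat j)%ZZ Ka; first by rewrite aKa ?mul0r.
by rewrite bKb ?mulr0 //; lia.
Qed.

(* Products of Laurent series are, degree by degree, products of the polynomials
   of their coefficients on a long enough window; this transfers commutativity
   and associativity from {poly F}. *)
Definition lpoly a K (n : nat) : {poly F} := \poly_(i < n) a (K + Z.of_nat i)%ZZ.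

Lemma lmul_coef_poly a b Ka Kb k (n : nat) : ord_ge a Ka -> ord_ge b Kb ->
  (Ka + Kb <= k)%ZZ -> (Z.to_nat (k - Ka - Kb) < n)%N ->
  lmul a b k = (lpoly a Ka n * lpoly b Kb n)`_(Z.to_nat (k - Ka - Kb)).
Proof.
move=> aKa bKb lek ltn; rewrite (lmul_coefE _ aKa bKb) coefM /wsum big_mkord.
apply: eq_bigr => j _; rewrite !coef_poly.
rewrite (leq_ltn_trans (leq_ord j) ltn).
rewrite (leq_ltn_trans (leq_subr _ _) ltn).
by have := leq_ord j => ?; congr (_ * b _); lia.
Qed.

Lemma coefM_take_poly (p r : {poly F}) (n i : nat) : (i < n)%N ->
  (take_poly n p * r)`_i = (p * r)`_i.
Proof.
move=> ltin; rewrite -[in RHS](poly_take_drop n p) mulrDl coefD.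
by rewrite mulrAC coefMXn ltin addr0.
Qed.

Lemma lpoly_lmul a b Ka Kb n : ord_ge a Ka -> ord_ge b Kb ->
  lpoly (lmul a b) (Ka + Kb) n = take_poly n (lpoly a Ka n * lpoly b Kb n).
Proof.
move=> aKa bKb; apply/polyP => i; rewrite coef_take_poly coef_poly.
case: ifP => // ltin; rewrite (@lmul_coef_poly _ _ _ _ _ n aKa bKb); try lia.
by congr (_ `_ _); lia.
Qed.

Lemma lmulC : commutative (@lmul F).
Proof.
move=> a b; apply: laurent_ext => k.
have [a_lb b_lb] := (ord_ge_lb (a := a), ord_ge_lb (a := b)).
have [ltk|lek] := Z.lt_ge_cases k (lb a + lb b).
  by rewrite (ord_ge_lmul a_lb b_lb) // (ord_ge_lmul b_lb a_lb) //; lia.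
pose n := (Z.to_nat (k - lb a - lb b)).+1.
rewrite (@lmul_coef_poly _ _ _ _ _ n a_lb b_lb) // (@lmul_coef_poly _ _ _ _ _ n b_lb a_lb); try lia.
by rewrite mulrC; congr (_ `_ _); lia.
Qed.

Lemma lmulA : associative (@lmul F).
Proof.
move=> a b c; apply: laurent_ext => k.
have a_lb := ord_ge_lb (a := a); have b_lb := ord_ge_lb (a := b).
have c_lb := ord_ge_lb (a := c).
have ab_lb := ord_ge_lmul a_lb b_lb; have bc_lb := ord_ge_lmul b_lb c_lb.
have [ltk|lek] := Z.lt_ge_cases k (lb a + lb b + lb c).
  by rewrite (ord_ge_lmul a_lb bc_lb) ?(ord_ge_lmul ab_lb c_lb) //; lia.
pose n := Z.to_nat (k - lb a - lb b - lb c).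
rewrite (@lmul_coef_poly _ _ _ _ _ n.+1 ab_lb c_lb); try lia.
rewrite (@lmul_coef_poly _ _ _ _ _ n.+1 a_lb bc_lb); try lia.
rewrite (lpoly_lmul _ a_lb b_lb) (lpoly_lmul _ b_lb c_lb).
rewrite (_ : Z.to_nat _ = n); last lia; rewrite [in RHS](_ : Z.to_nat _ = n); last lia.
by rewrite coefM_take_poly // mulrC coefM_take_poly // mulrC mulrA.
Qed.

Lemma lmulDl : left_distributive (@lmul F) (@ladd F).
Proof.
move=> a b c; apply: laurent_ext => k.
pose K := Z.min (lb a) (lb b).
have a_K : ord_ge a K by apply: ord_geW (ord_ge_lb (a := a)); lia.
have b_K : ord_ge b K by apply: ord_geW (ord_ge_lb (a := b)); lia.
have ab_K : ord_ge (ladd a b) K by move=> i ltiK /=; rewrite a_K ?b_K ?addr0.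
rewrite /= -[lmul_coef _ _ k]/(lmul _ c k) -[lmul_coef a c k]/(lmul a c k).
rewrite -[lmul_coef b c k]/(lmul b c k) (lmul_coefE _ ab_K (ord_ge_lb (a := c))).
rewrite (lmul_coefE _ a_K (ord_ge_lb (a := c))) (lmul_coefE _ b_K (ord_ge_lb (a := c))).
by rewrite /wsum -big_split; apply: eq_bigr => j _; rewrite /= mulrDl.
Qed.

Lemma ord_ge_lone : ord_ge (lone F) 0.
Proof. by move=> k ltk /=; case: Z.eqb_spec => //; lia. Qed.

Lemma lmul1l : left_id (lone F) (@lmul F).
Proof.
move=> a; apply: laurent_ext => k.
have a_lb := ord_ge_lb (a := a).
have [ltk|lek] := Z.lt_ge_cases k (0 + lb a).
  by rewrite (ord_ge_lmul ord_ge_lone a_lb) // a_lb //; lia.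
pose n := (Z.to_nat (k - 0 - lb a)).+1.
rewrite (@lmul_coef_poly _ _ _ _ _ n ord_ge_lone a_lb) //.
rewrite (_ : lpoly _ _ _ = 1) ?mul1r ?coef_poly ?ltnSn; last first.
  by apply/polyP => -[|i]; rewrite coef_poly coef1 /=; case: (_ < _)%N.
by congr (a _); lia.
Qed.

Lemma laddA : associative (@ladd F).
Proof. by move=> a b c; apply: laurent_ext => k /=; rewrite addrA. Qed.
Lemma laddC : commutative (@ladd F).
Proof. by move=> a b; apply: laurent_ext => k /=; rewrite addrC. Qed.
Lemma ladd0l : left_id (lzero F) (@ladd F).
Proof. by move=> a; apply: laurent_ext => k /=; rewrite add0r. Qed.
Lemma laddNl : left_inverse (lzero F) (@lopp F) (@ladd F).
Proof. by move=> a; apply: laurent_ext => k /=; rewrite addNr. Qed.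

HB.instance Definition _ := gen_eqMixin L.
HB.instance Definition _ := gen_choiceMixin L.

Lemma lone_neq0 : lone F != lzero F.
Proof. by apply/eqP => /(congr1 (fun a : L => a 0%ZZ)) /= /eqP; rewrite oner_eq0. Qed.

HB.instance Definition _ := GRing.isZmodule.Build L laddA laddC ladd0l laddNl.
HB.instance Definition _ :=
  GRing.Zmodule_isComNzRing.Build L lmulA lmulC lmul1l lmulDl lone_neq0.

End LaurentRing.

Section LaurentSeries.
Variable F : finFieldType.
Local Notation L := (laurent F).
Implicit Types (a b x : L).

Lemma lcoef_sum I (r : seq I) (P : pred I) (G : I -> L) k :
  (\sum_(i <- r | P i) G i) k = \sum_(i <- r | P i) G i k.
Proof. exact: (big_morph (fun a : L => a k)). Qed.

Lemma lpowE a n : lpow a n = a ^+ n.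
Proof. by elim: n => //= n ->; rewrite exprS. Qed.

Lemma ord_geX a K n : ord_ge a K -> ord_ge (a ^+ n) (Z.of_nat n * K)%ZZ.
Proof.
move=> aK; elim: n => [|n IHn]; first by apply: ord_geW (ord_ge_lone F); lia.
rewrite exprS; apply: ord_geW (ord_ge_lmul aK IHn); lia.
Qed.

Lemma ord_geB a b K : ord_ge a K -> ord_ge b K -> ord_ge (a - b) K.
Proof. by move=> aK bK k ltk /=; rewrite aK ?bK ?subr0. Qed.

Lemma laurent_eq_ord a b : (forall K, ord_ge (a - b) K) -> a = b.
Proof.
move=> abK; apply: laurent_ext => k; apply/eqP; rewrite -subr_eq0.
by apply/eqP; apply: (abK (k + 1)%ZZ); lia.
Qed.

Lemma lmono_lb (c : F) j : lbounded (fun k => if Z.eqb k j then c else 0).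
Proof. by exists j => k ltk; case: Z.eqb_spec => //; lia. Qed.
Definition lmono (c : F) j : L := Laurent (lmono_lb c j).

Lemma ord_ge_lmono c j : ord_ge (lmono c j) j.
Proof. by move=> k ltk /=; case: Z.eqb_spec => //; lia. Qed.

Lemma lmonoM_coef c j a k : (lmono c j * a) k = c * a (k - j)%ZZ.
Proof.
rewrite (lmul_coefE _ (@ord_ge_lmono c j) (ord_ge_lb (a := a))) /wsum big_nat_recl //.
rewrite big1 ?addr0 => [|i _] /=; last by case: Z.eqb_spec; rewrite ?mul0r //; lia.
by case: Z.eqb_spec => //; rewrite Z.add_0_r.
Qed.

Lemma lmonoM c d i j : lmono c i * lmono d j = lmono (c * d) (i + j).
Proof.
apply: laurent_ext => k; rewrite lmonoM_coef /=.
by do 2!case: Z.eqb_spec; rewrite ?mulr0 //; lia.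
Qed.

Lemma lmonoX c j n : lmono c j ^+ n = lmono (c ^+ n) (Z.of_nat n * j).
Proof.
elim: n => [|n IHn]; first by apply: laurent_ext => k /=; rewrite expr0.
by rewrite exprS IHn lmonoM -exprS; congr lmono; lia.
Qed.

Definition ltrunc a K (n : nat) : L :=
  \sum_(0 <= j < n) lmono (a (K + Z.of_nat j)%ZZ) (K + Z.of_nat j).

Lemma ord_ge_sub_ltrunc a K n : ord_ge a K -> ord_ge (a - ltrunc a K n) (K + Z.of_nat n).
Proof.
move=> aK k ltk; rewrite /= lcoef_sum /=.
have [ltkK|leKk] := Z.lt_ge_cases k K.
  by rewrite aK // big1 ?subr0 // => j _; case: Z.eqb_spec => //; lia.
rewrite (bigD1_seq (Z.to_nat (k - K))) ?iota_uniq ?mem_index_iota /=; try lia.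
rewrite big1_seq => [|j /andP[/eqP neqj _]]; last by case: Z.eqb_spec => //; lia.
have -> : (K + Z.of_nat (Z.to_nat (k - K)) = k)%ZZ by lia.
by rewrite Z.eqb_refl addr0 subrr.
Qed.

Section Embedding.
Variable N : nat.
Hypothesis N_gt0 : (0 < N)%N.

Lemma lembedD a b : lembed N (a + b) = lembed N a + lembed N b.
Proof. by apply: laurent_ext => k /=; case: ifP; rewrite ?addr0. Qed.

Lemma lembed0 : lembed N 0 = 0 :> L.
Proof. by apply: laurent_ext => k /=; case: ifP. Qed.

Lemma lembedB a b : lembed N (a - b) = lembed N a - lembed N b.
Proof. by apply: laurent_ext => k /=; case: ifP; rewrite ?subr0. Qed.

Lemma lembed_sum I (r : seq I) (G : I -> L) :
  lembed N (\sum_(i <- r) G i) = \sum_(i <- r) lembed N (G i).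
Proof. exact: (big_morph _ lembedD lembed0). Qed.

Lemma lembed_lmono c j : lembed N (lmono c j) = lmono c (Z.of_nat N * j).
Proof.
apply: laurent_ext => k /=; rewrite N_gt0 /=.
have N0 : (0 < Z.of_nat N)%ZZ by lia.
have k_divmod := Z.div_mod k (Z.of_nat N) ltac:(lia).
case: (Z.eqb_spec (k mod Z.of_nat N) 0) => [kN0|kN].
  by do 2!case: Z.eqb_spec => //; nia.
by case: Z.eqb_spec => // kNj; case: kN; rewrite kNj Z.mul_comm Z.mod_mul //; lia.
Qed.

Lemma ord_ge_lembed a K : ord_ge a K -> ord_ge (lembed N a) (Z.of_nat N * K).
Proof.
move=> aK k ltk /=; rewrite N_gt0 /=; case: Z.eqb => //; apply: aK.
by apply: Z.div_lt_upper_bound; lia.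
Qed.

Lemma lembed_inj : injective (@lembed F N).
Proof.
move=> a b eqab; apply: laurent_ext => k.
have := congr1 (fun c : L => c (k * Z.of_nat N)%ZZ) eqab => /=.
by rewrite N_gt0 Z.mod_mul ?Z.div_mul //=; lia.
Qed.

End Embedding.

Lemma lcoef_nat n k : (n%:R : L) k = if Z.eqb k 0 then n%:R else 0.
Proof.
elim: n => [|n IHn]; first by case: Z.eqb.
by rewrite mulrS /= IHn; case: Z.eqb; rewrite ?addr0 ?mulrS.
Qed.

Lemma pchar_laurent p : p \in [pchar F] -> p \in [pchar L].
Proof.
move=> pcharFp; rewrite inE (pcharf_prime pcharFp); apply/eqP/laurent_ext => k.
by rewrite lcoef_nat (pcharf0 pcharFp); case: Z.eqb.
Qed.

Section Frobenius.
Variable m : nat.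
Local Notation N := (#|F| ^ m)%N.

Lemma card_exp_gt0 : (0 < N)%N.
Proof. by rewrite expn_gt0 (ltn_trans _ (finNzRing_gt1 F)). Qed.

Lemma exprD_card_exp a b : (a + b) ^+ N = a ^+ N + b ^+ N.
Proof.
apply: exprDn_pchar; have [p pr_p pcharFp] := finPcharP F.
by rewrite pnatX (card_pprimeChar pcharFp) pnatX pnatE // pchar_laurent.
Qed.

Lemma expr_card_exp_sum I (r : seq I) (G : I -> L) :
  (\sum_(i <- r) G i) ^+ N = \sum_(i <- r) G i ^+ N.
Proof.
apply: (big_morph _ exprD_card_exp).
by rewrite expr0n gtn_eqF // card_exp_gt0.
Qed.

Lemma expf_card_exp (c : F) : c ^+ N = c.
Proof. by elim: m => // n IHn; rewrite expnSr exprM IHn expf_card. Qed.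

(* Both sides are additive and agree on monomials; truncating [a] leaves a tail
   of arbitrarily high order on both sides. *)
Lemma lembed_card_exp a : lembed N a = a ^+ N.
Proof.
have N_gt0 := card_exp_gt0.
apply: laurent_eq_ord => K.
pose W := Z.to_nat (Z.abs K - lb a); pose t := ltrunc a (lb a) W.
have tail_ord := ord_ge_sub_ltrunc (n := W) (ord_ge_lb (a := a)).
have -> : lembed N a = lembed N t + lembed N (a - t) by rewrite -lembedD addrC subrK.
have -> : a ^+ N = t ^+ N + (a - t) ^+ N by rewrite -exprD_card_exp addrC subrK.
have -> : lembed N t = t ^+ N.
  rewrite lembed_sum // expr_card_exp_sum; apply: eq_bigr => j _.
  by rewrite lembed_lmono // lmonoX expf_card_exp.
rewrite opprD addrACA subrr add0r.
have := ord_geB (ord_ge_lembed N_gt0 tail_ord) (ord_geX (n := N) tail_ord).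
by apply: ord_geW; rewrite /W; nia.
Qed.

Lemma lrootE x : lroot m x = x.
Proof.
rewrite /lroot; case: ClassicalEpsilon.excluded_middle_informative => [yP|]; last first.
  by case; exists x; rewrite lpowE lembed_card_exp.
case: (ClassicalEpsilon.constructive_indefinite_description _ yP) => y /=.
by rewrite lpowE -lembed_card_exp => /(lembed_inj card_exp_gt0).
Qed.

End Frobenius.

End LaurentSeries.

Section Valuation.
Variable F : finFieldType.
Local Notation L := (laurent F).
Implicit Types (a : L) (v : Z).

Lemma is_valP a : a = 0 \/ exists v, is_val a v.
Proof.
have [[k ak]|a0] := pselect (exists k, a k != 0); last first.
  by left; apply: laurent_ext => k; apply/eqP; apply: contra_notT a0 => ak; exists k.
right; have lek : (lb a <= k)%ZZ by apply: ord_ge_coef_neq0 (ord_ge_lb (a := a)) (elimN eqP ak).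
have ex : exists j, a (lb a + Z.of_nat j)%ZZ != 0.
  by exists (Z.to_nat (k - lb a)); rewrite (_ : (_ + _)%ZZ = k) //; lia.
case: (ex_minnP ex) => j /eqP aj jmin; exists (lb a + Z.of_nat j)%ZZ; split => // i lti.
have [ltib|] := Z.lt_ge_cases i (lb a); first exact: ord_ge_lb.
move=> lebi; apply/eqP/negP => /negP ai.
have := jmin (Z.to_nat (i - lb a)); rewrite (_ : (_ + _)%ZZ = i); last lia.
by move=> /(_ ai); lia.
Qed.

Lemma is_val_uniq a v v' : is_val a v -> is_val a v' -> v = v'.
Proof.
move=> [av vmin] [av' v'min].
by case: (Z.lt_total v v') => [/v'min|[//|/vmin]].
Qed.

End Valuation.

Section AbsoluteValue.
Variables (F : finFieldType) (e : nat).
Hypothesis e_gt0 : (0 < e)%N.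
Local Notation L := (laurent F).
Implicit Types (a : L) (K v : Z).

Local Notation q := (INR #|F|).
Local Notation ln := Rpower.ln.

Definition ord_abs K : R := Rpower q (- IZR K / INR e).

Lemma ord_abs_gt0 K : (0 < ord_abs K)%RR.
Proof. exact: exp_pos. Qed.

Lemma ord_abs_lt K K' : (K < K')%ZZ -> (ord_abs K' < ord_abs K)%RR.
Proof.
move=> ltK; apply: Rpower_lt.
  by apply: lt_1_INR; apply/ltP; exact: finNzRing_gt1.
apply: Rmult_lt_compat_r; first by apply/Rinv_0_lt_compat/lt_0_INR/ltP.
by apply/Ropp_lt_contravar/IZR_lt.
Qed.

Lemma ord_abs_le K K' : (K <= K')%ZZ -> (ord_abs K' <= ord_abs K)%RR.
Proof.
by case/Z.le_lteq => [/ord_abs_lt/Rlt_le|->] //; apply: Rle_refl.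
Qed.

Lemma labs_is_val a v : is_val a v -> labs e a = ord_abs v.
Proof.
move=> av; rewrite /labs.
case: ClassicalEpsilon.excluded_middle_informative => [vP|[]]; last by exists v.
by case: ClassicalEpsilon.constructive_indefinite_description => v' /= /is_val_uniq /(_ av) ->.
Qed.

Lemma labs0 : labs e (0 : L) = 0%RR.
Proof.
by rewrite /labs; case: ClassicalEpsilon.excluded_middle_informative => // -[v []].
Qed.

Lemma labs_ge0 a : (0 <= labs e a)%RR.
Proof.
have [->|[v /labs_is_val ->]] := is_valP a; first by rewrite labs0; apply: Rle_refl.
exact/Rlt_le/ord_abs_gt0.
Qed.

Lemma ord_ge_labs a K : ord_ge a K <-> (labs e a <= ord_abs K)%RR.
Proof.
have [->|[v av]] := is_valP a.
  by rewrite labs0; split=> [_|_ k _ //]; apply/Rlt_le/ord_abs_gt0.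
rewrite (labs_is_val av); split=> [aK|leK k ltk].
  apply: ord_abs_le; case: (Z.lt_ge_cases v K) => // ltv.
  by case: av => /(_ (aK _ ltv)).
case: av => _; apply; case: (Z.lt_ge_cases k v) => // lek.
by have := ord_abs_lt (Z.le_lt_trans _ _ _ lek ltk); lra.
Qed.

Lemma labs_lt_ord_ge a K : (labs e a < ord_abs K)%RR -> ord_ge a (K + 1).
Proof.
move=> ltK; apply/ord_ge_labs; have [->|[v av]] := is_valP a.
  by rewrite labs0; apply/Rlt_le/ord_abs_gt0.
rewrite (labs_is_val av) in ltK *; apply: ord_abs_le.
by case: (Z.le_gt_cases v K) => [/ord_abs_le|]; [lra | lia].
Qed.

Lemma ord_abs_small (eps : R) : (0 < eps)%RR -> exists K, (ord_abs K < eps)%RR.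
Proof.
move=> eps_gt0.
have lnq : (0 < ln q)%RR.
  by rewrite -ln_1; apply: ln_increasing; [lra | apply/lt_1_INR/ltP/finNzRing_gt1].
have e_pos : (0 < INR e)%RR by apply/lt_0_INR/ltP.
have [upK _] := archimed (- ln eps * INR e / ln q).
exists (up (- ln eps * INR e / ln q)); rewrite /ord_abs /Rpower -[X in (_ < X)%RR](exp_ln eps) //.
apply: exp_increasing; set K := IZR _ in upK *.
have : (- ln eps * INR e < K * ln q)%RR.
  by move: (Rmult_lt_compat_r _ _ _ lnq upK); rewrite /Rdiv Rmult_assoc Rinv_l; lra.
move=> lt1; have : (- ln eps < K * ln q / INR e)%RR.
  by apply: (Rmult_lt_reg_r (INR e)) => //; rewrite /Rdiv Rmult_assoc Rinv_l; lra.
rewrite (_ : (- K / INR e * ln q = - (K * ln q / INR e))%RR); first lra.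
by field; lra.
Qed.

Lemma ord_ge_labs_lt (eps : R) : (0 < eps)%RR ->
  exists K, forall a, ord_ge a K -> (labs e a < eps)%RR.
Proof.
move=> /ord_abs_small[K Keps]; exists K => a /ord_ge_labs aK.
exact: Rle_lt_trans aK Keps.
Qed.

Lemma labs_le_ord (a b : L) :
  (forall K, ord_ge b K -> ord_ge a K) -> (labs e a <= labs e b)%RR.
Proof.
move=> ba; have [b0|[v [bv bvmin]]] := is_valP b.
  suff -> : a = 0 by rewrite b0; apply: Rle_refl.
  by apply: laurent_eq_ord => K; rewrite subr0; apply: ba; rewrite b0.
by rewrite (labs_is_val (conj bv bvmin)); apply/ord_ge_labs/ba.
Qed.

End AbsoluteValue.

Lemma ltn_argmax (h : nat -> R) B : (0 < B)%N ->
  exists2 i, (i < B)%N & forall j, (j < B)%N -> (h j <= h i)%RR.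
Proof.
elim: B => // -[|B] IH _.
  by exists 0%N => // j; rewrite ltnS leqn0 => /eqP ->; apply: Rle_refl.
have [i ltiB imax] := IH isT.
have [hle|hgt] := Rle_dec (h B.+1) (h i).
  by exists i => [|j]; [exact: ltnW | rewrite ltnS leq_eqVlt => /predU1P[->|/imax]].
exists B.+1 => // j; rewrite ltnS leq_eqVlt => /predU1P[->|/imax hj]; first exact: Rle_refl.
lra.
Qed.


Section OrdBasis.
Variables (F : finFieldType) (X : topologicalType).
Local Notation L := (laurent F).

Definition ord_continuous (g : X -> L) :=
  forall x K, nbhs x (fun y => ord_ge (g y - g x) K).

Definition ord_null (a : nat -> L) :=
  forall K, exists n0, forall n, (n0 <= n)%N -> ord_ge (a n) K.

Definition ord_sum_to (g : X -> L) (a : nat -> L) (b : nat -> X -> L) :=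
  forall K, exists M0, forall M, (M0 <= M)%N -> forall x, ord_ge (g x - psum a b x M) K.

Definition ord_norm_eq (a : nat -> L) (g : X -> L) :=
  forall K, (forall n, ord_ge (a n) K) <-> (forall x, ord_ge (g x) K).

Definition ord_basis (b : nat -> X -> L) :=
  (forall n, ord_continuous (b n)) /\
  forall g, ord_continuous g -> exists a,
    [/\ ord_null a, ord_sum_to g a b, ord_norm_eq a g &
        forall a', ord_null a' -> ord_sum_to g a' b -> a' = a].

(* On an empty X the zero function has no sup norm: the empty set of reals has
   no least upper bound. *)
Lemma orthonormal_basis_inhabited e (b : nat -> X -> L) : orthonormal_basis e b -> inhabited X.
Proof.
move=> [_ bON]; apply: contrapT => noX.
have cst0 : lcontinuous e (fun _ : X => lzero F).
  by move=> x; case: noX; constructor.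
have [a [_ _ [M [_ [_ Mlub]]] _]] := bON _ cst0.
have : (M <= M - 1)%RR by apply: Mlub => r [x _]; case: noX; constructor.
lra.
Qed.

Variable e : nat.
Hypothesis e_gt0 : (0 < e)%N.

Lemma lcontinuousE g : lcontinuous e g <-> ord_continuous g.
Proof.
split=> [gC x K|gC x eps eps_gt0].
  by apply: filterS (gC x _ (ord_abs_gt0 F e K)) => y /Rlt_le /(ord_ge_labs e_gt0).
have [K Keps] := ord_ge_labs_lt F e_gt0 eps_gt0.
by apply: filterS (gC x K) => y /Keps.
Qed.

Lemma null_seqE a : null_seq e a <-> ord_null a.
Proof.
split=> [a0 K|a0 eps eps_gt0].
  have [n0 an0] := a0 _ (ord_abs_gt0 F e K).
  by exists n0 => n /an0 /(ord_ge_labs e_gt0).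
have [K Keps] := ord_ge_labs_lt F e_gt0 eps_gt0.
by have [n0 an0] := a0 K; exists n0 => n /an0 /Keps /Rlt_le.
Qed.

Lemma sum_toE g a b : sum_to e g a b <-> ord_sum_to g a b.
Proof.
split=> [gab K|gab eps eps_gt0].
  have [M0 gM0] := gab _ (ord_abs_gt0 F e K).
  by exists M0 => M /gM0 gM x; apply/(ord_ge_labs e_gt0)/gM.
have [K Keps] := ord_ge_labs_lt F e_gt0 eps_gt0.
by have [M0 gM0] := gab K; exists M0 => M /gM0 gM x; apply/Rlt_le/Keps/gM.
Qed.

Lemma ord_norm_eq_of_max_sup a g :
  (exists M, max_abs_is e a M /\ sup_norm_is e g M) -> ord_norm_eq a g.
Proof.
move=> [M [[aM [n0 an0]] [gM Mlub]]] K; split=> [aK x|gK n].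
  apply/(ord_ge_labs e_gt0); apply: Rle_trans (gM _ (ex_intro _ x erefl)) _.
  by rewrite -an0; apply/(ord_ge_labs e_gt0).
apply/(ord_ge_labs e_gt0); apply: Rle_trans (aM n) _.
by apply: Mlub => _ [x ->]; apply/(ord_ge_labs e_gt0).
Qed.

Lemma ord_null_argmax a : ord_null a ->
  exists n0, forall n, (labs e (a n) <= labs e (a n0))%RR.
Proof.
move=> a0; have [[n1 an1]|] := pselect (exists n, a n <> 0); last first.
  move=> /forallNP anz; exists 0%N => n.
  have a0n k : a k = 0 by apply: contrapT; apply: anz.
  by rewrite !a0n; apply: Rle_refl.
have [//|[v1 av1]] := is_valP (a n1).
have [n2 an2] := a0 (v1 + 1)%ZZ.
have [n0 _ n0max] := @ltn_argmax (fun n => labs e (a n)) (maxn n2 n1.+1)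
  (leq_trans (ltn0Sn n1) (leq_maxr _ _)).
exists n0 => n; have [/n0max //|len] := ltnP n (maxn n2 n1.+1).
apply: Rle_trans (n0max n1 (leq_trans (ltnSn n1) (leq_maxr _ _))).
rewrite (labs_is_val e av1); apply/(ord_ge_labs e_gt0).
by apply: ord_geW (an2 _ (leq_trans (leq_maxl _ _) len)); lia.
Qed.

Lemma max_sup_of_ord_norm_eq (x0 : X) a g : ord_null a -> ord_norm_eq a g ->
  exists M, max_abs_is e a M /\ sup_norm_is e g M.
Proof.
move=> a0 ag; have [n0 n0max] := ord_null_argmax a0.
have gle x : (labs e (g x) <= labs e (a n0))%RR.
  apply: (labs_le_ord e_gt0) => K /(ord_ge_labs e_gt0) n0K; move: x; apply/(ag K) => n.
  exact/(ord_ge_labs e_gt0)/(Rle_trans _ _ _ (n0max n)).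
exists (labs e (a n0)); split; first by split=> //; exists n0.
split=> [_ [x ->] //|r rub]; apply: Rnot_lt_le => ltr.
have [a00|[v0 av0]] := is_valP (a n0).
  rewrite a00 labs0 in ltr.
  by have := rub _ (ex_intro _ x0 erefl); have := labs_ge0 e (g x0); lra.
rewrite (labs_is_val e av0) in ltr.
have gv x : ord_ge (g x) (v0 + 1).
  by apply: (labs_lt_ord_ge e_gt0); apply: Rle_lt_trans ltr; apply: rub; exists x.
by case: av0 => + _; apply; apply: (proj2 (ag _) gv); lia.
Qed.

Lemma orthonormal_basisE (x0 : X) b : orthonormal_basis e b <-> ord_basis b.
Proof.
split=> -[bC bON]; split=> [n|g gC]; try exact/lcontinuousE.
  have [a [/null_seqE a0 /sum_toE gab /ord_norm_eq_of_max_sup ag auniq]] :=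
    bON g (proj2 (lcontinuousE g) gC).
  by exists a; split=> // a' /null_seqE a'0 /sum_toE; apply: auniq.
have [a [a0 gab ag auniq]] := bON g (proj1 (lcontinuousE g) gC).
exists a; split; [exact/null_seqE | exact/sum_toE | exact: max_sup_of_ord_norm_eq |].
by move=> a' /null_seqE a'0 /sum_toE; apply: auniq.
Qed.

End OrdBasis.

Lemma eventually_forall_ltn (P : nat -> nat -> Prop) n :
  (forall r, (r < n)%N -> exists M0, forall M, (M0 <= M)%N -> P r M) ->
  exists M0, forall r, (r < n)%N -> forall M, (M0 <= M)%N -> P r M.
Proof.
elim: n => [|n IHn] PM; first by exists 0%N.
have [M1 PM1] := IHn (fun r ltrn => PM r (ltnW ltrn)).
have [M2 PM2] := PM n (ltnSn n).
exists (maxn M1 M2) => r; rewrite ltnS leq_eqVlt => /predU1P[->|ltrn] M.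
  by rewrite geq_max => /andP[_]; apply: PM2.
by rewrite geq_max => /andP[+ _]; apply: PM1.
Qed.

Lemma psumS (F : finFieldType) (X : topologicalType) (a : nat -> laurent F) b (x : X) M :
  psum a b x M.+1 = psum a b x M + a M * b M x.
Proof. by []. Qed.

Section ResidueSplit.
Variables (F : finFieldType) (N : nat).
Hypothesis N_gt0 : (0 < N)%N.
Local Notation L := (laurent F).
Local Notation NZ := (Z.of_nat N).
Implicit Types (c : nat -> L).

Lemma Z_divmodN k : k = (NZ * (k / NZ) + k mod NZ)%ZZ /\ (0 <= k mod NZ < NZ)%ZZ.
Proof. by split; [apply: Z.div_mod | apply: Z.mod_pos_bound]; lia. Qed.

Lemma lsplit_lb (r : nat) (a : L) : lbounded (fun j => a (j * NZ + Z.of_nat r)%ZZ).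
Proof.
exists (Z.min (lb a) 0 - Z.of_nat r)%ZZ => j ltj; apply: ord_ge_lb; nia.
Qed.
Definition lsplit (r : nat) (a : L) : L := Laurent (lsplit_lb r a).

Lemma exists_ord_ge_ltn c n : exists K, forall r, (r < n)%N -> ord_ge (c r) K.
Proof.
elim: n => [|n [K cK]]; first by exists 0%ZZ.
exists (Z.min K (lb (c n))) => r; rewrite ltnS leq_eqVlt => /predU1P[->|/cK].
  by apply: ord_geW (ord_ge_lb (a := c n)); lia.
by apply: ord_geW; lia.
Qed.

Lemma lmerge_lb c : lbounded (fun k => c (Z.to_nat (k mod NZ)) (k / NZ)%ZZ).
Proof.
have [K cK] := exists_ord_ge_ltn c N.
exists (Z.min K 0 * NZ)%ZZ => k ltk; have [_ kmod] := Z_divmodN k.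
apply: cK; first by apply/ltP; lia.
by apply: (Z.lt_le_trans _ (Z.min K 0)); [apply: Z.div_lt_upper_bound|]; lia.
Qed.
Definition lmerge c : L := Laurent (lmerge_lb c).

Lemma lmerge_split (a : L) : lmerge (lsplit ^~ a) = a.
Proof. by apply: laurent_ext => k /=; have [kdiv kmod] := Z_divmodN k; congr (a _); lia. Qed.

Lemma lsplit_merge c r : (r < N)%N -> lsplit r (lmerge c) = c r.
Proof.
move=> /ltP ltrN; apply: laurent_ext => j /=.
have -> : ((j * NZ + Z.of_nat r) mod NZ = Z.of_nat r)%ZZ.
  by rewrite Z.add_comm Z.mod_add ?Z.mod_small; lia.
have -> : ((j * NZ + Z.of_nat r) / NZ = j)%ZZ.
  by rewrite Z.div_add_l ?Z.div_small; lia.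
by rewrite Nat2Z.id.
Qed.

Lemma lmerge_ext c c' : (forall r, (r < N)%N -> c r = c' r) -> lmerge c = lmerge c'.
Proof.
move=> cc'; apply: laurent_ext => k /=; have [_ kmod] := Z_divmodN k.
by rewrite cc' //; apply/ltP; lia.
Qed.

Lemma lmergeD c c' : lmerge c + lmerge c' = lmerge (fun r => c r + c' r).
Proof. exact: laurent_ext. Qed.

Lemma lmergeB c c' : lmerge c - lmerge c' = lmerge (fun r => c r - c' r).
Proof. exact: laurent_ext. Qed.

Lemma lsplitB r (a b : L) : lsplit r (a - b) = lsplit r a - lsplit r b.
Proof. exact: laurent_ext. Qed.

Lemma ord_ge_lsplit r (a : L) K : (r < N)%N -> ord_ge a (K * NZ) -> ord_ge (lsplit r a) K.
Proof. by move=> /ltP ltrN aK j ltj /=; apply: aK; nia. Qed.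

Lemma ord_ge_lmerge c K :
  (forall r, (r < N)%N -> ord_ge (c r) K) -> ord_ge (lmerge c) (K * NZ).
Proof.
move=> cK k ltk /=; have [kdiv kmod] := Z_divmodN k.
by apply: cK; [apply/ltP; lia | nia].
Qed.

(* [ceil_ord r K] is the least [j] with [j * N + r >= K]. *)
Definition ceil_ord (r : nat) K := ((K - Z.of_nat r - 1) / NZ + 1)%ZZ.

Lemma ord_ge_lsplitP (a : L) K :
  ord_ge a K <-> forall r, (r < N)%N -> ord_ge (lsplit r a) (ceil_ord r K).
Proof.
split=> [aK r _ j ltj /=|aK k ltk].
  by apply: aK; have [] := Z_divmodN (K - Z.of_nat r - 1); rewrite /ceil_ord in ltj; nia.
have [kdiv kmod] := Z_divmodN k; set r := Z.to_nat (k mod NZ).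
have ltrN : (r < N)%N by apply/ltP; lia.
have := aK r ltrN (k / NZ)%ZZ; rewrite /= (_ : (_ + _)%ZZ = k); last lia.
by apply; have [] := Z_divmodN (K - Z.of_nat r - 1); rewrite /ceil_ord; nia.
Qed.

Lemma lmerge_sum c : lmerge c = \sum_(0 <= r < N) lmono 1 (Z.of_nat r) * lembed N (c r).
Proof.
apply: laurent_ext => k; rewrite lcoef_sum.
under eq_bigr => r _ do rewrite lmonoM_coef mul1r /= N_gt0 /=.
have [kdiv kmod] := Z_divmodN k.
rewrite (bigD1_seq (Z.to_nat (k mod NZ))) ?iota_uniq ?mem_index_iota /=; try lia.
have -> : (k - Z.of_nat (Z.to_nat (k mod NZ)) = (k / NZ) * NZ)%ZZ by lia.
rewrite Z.mod_mul ?Z.div_mul /=; try lia.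
rewrite big1_seq ?addr0 // => r /andP[/eqP neqr]; rewrite mem_index_iota => /andP[_ ltrN].
case: Z.eqb_spec => // kr0; have [krdiv _] := Z_divmodN (k - Z.of_nat r).
rewrite kr0 in krdiv; have : (k / NZ - (k - Z.of_nat r) / NZ = 0)%ZZ by nia.
lia.
Qed.

Section PowerMap.
Hypothesis lembed_expr : forall a : L, lembed N a = a ^+ N.
Variable X : topologicalType.
Implicit Types (g : X -> L) (b : nat -> X -> L) (A : nat -> nat -> L).

Lemma lmergeM_expr c (a : L) : lmerge c * a ^+ N = lmerge (fun r => c r * a).
Proof.
rewrite !lmerge_sum mulr_suml; apply: eq_bigr => r _.
by rewrite -mulrA !lembed_expr exprMn.
Qed.

Lemma psum_lmerge A b x M :
  psum (fun n => lmerge (A ^~ n)) (fun n x => b n x ^+ N) x M =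
  lmerge (fun r => psum (A r) b x M).
Proof.
elim: M => [|M IHM]; first exact: laurent_ext.
by rewrite !psumS IHM lmergeM_expr lmergeD.
Qed.

Lemma ord_continuous_expr g : ord_continuous g -> ord_continuous (fun x => g x ^+ N).
Proof.
move=> gC x K; apply: filterS (gC x (Z.abs K)) => y gyK.
by rewrite -!lembed_expr -lembedB //; apply: ord_geW (ord_ge_lembed N_gt0 gyK); nia.
Qed.

Lemma ord_continuous_lsplit r g :
  (r < N)%N -> ord_continuous g -> ord_continuous (fun x => lsplit r (g x)).
Proof.
move=> ltrN gC x K; apply: filterS (gC x (K * NZ)%ZZ) => y.
by rewrite -lsplitB; apply: ord_ge_lsplit.
Qed.

Lemma ord_null_lsplit r (a : nat -> L) :
  (r < N)%N -> ord_null a -> ord_null (fun n => lsplit r (a n)).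
Proof.
move=> ltrN a0 K; have [n0 an0] := a0 (K * NZ)%ZZ.
by exists n0 => n /an0; apply: ord_ge_lsplit.
Qed.

Lemma ord_null_lmerge A :
  (forall r, (r < N)%N -> ord_null (A r)) -> ord_null (fun n => lmerge (A ^~ n)).
Proof.
move=> A0 K; have [n0 An0] := eventually_forall_ltn (fun r ltrN => A0 r ltrN (Z.abs K)).
exists n0 => n len; apply: ord_geW (ord_ge_lmerge (fun r ltrN => An0 r ltrN n len)); nia.
Qed.

Lemma ord_sum_to_lsplit r g (a : nat -> L) b : (r < N)%N ->
  ord_sum_to g a (fun n x => b n x ^+ N) ->
  ord_sum_to (fun x => lsplit r (g x)) (fun n => lsplit r (a n)) b.
Proof.
move=> ltrN gab K; have [M0 gM0] := gab (K * NZ)%ZZ; exists M0 => M leM x.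
have := gM0 M leM x; rewrite -[a in psum a](funext (fun n => lmerge_split (a n))).
rewrite psum_lmerge -{1}(lmerge_split (g x)) lmergeB => /(ord_ge_lsplit ltrN).
by rewrite lsplit_merge.
Qed.

Lemma ord_sum_to_lmerge g A b :
  (forall r, (r < N)%N -> ord_sum_to (fun x => lsplit r (g x)) (A r) b) ->
  ord_sum_to g (fun n => lmerge (A ^~ n)) (fun n x => b n x ^+ N).
Proof.
move=> gAb K; have [M0 gM0] := eventually_forall_ltn (fun r ltrN => gAb r ltrN (Z.abs K)).
exists M0 => M leM x; rewrite psum_lmerge -{1}(lmerge_split (g x)) lmergeB.
by apply: ord_geW (ord_ge_lmerge (fun r ltrN => gM0 r ltrN M leM x)); nia.
Qed.

Lemma ord_norm_eq_lmerge g A :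
  (forall r, (r < N)%N -> ord_norm_eq (A r) (fun x => lsplit r (g x))) ->
  ord_norm_eq (fun n => lmerge (A ^~ n)) g.
Proof.
move=> gA K; split=> [AK x|gK n]; apply/ord_ge_lsplitP => r ltrN.
  move: x; apply/(gA r ltrN) => n.
  by have := proj1 (ord_ge_lsplitP _ _) (AK n) r ltrN; rewrite lsplit_merge.
rewrite lsplit_merge //; move: n; apply/(gA r ltrN) => x.
exact: (proj1 (ord_ge_lsplitP _ _) (gK x) r ltrN).
Qed.

Lemma ord_basis_expr b : ord_basis b -> ord_basis (fun n x => b n x ^+ N).
Proof.
move=> [bC bON]; split=> [n|g gC]; first exact: ord_continuous_expr.
have gr r : exists a : nat -> L, (r < N)%N ->
    [/\ ord_null a, ord_sum_to (fun x => lsplit r (g x)) a b,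
        ord_norm_eq a (fun x => lsplit r (g x)) &
        forall a', ord_null a' -> ord_sum_to (fun x => lsplit r (g x)) a' b -> a' = a].
  have [ltrN|] := ltnP r N; last by exists (fun _ => 0).
  by have [a aP] := bON _ (ord_continuous_lsplit ltrN gC); exists a.
have [A AP] := choice gr; exists (fun n => lmerge (A ^~ n)); split.
- by apply: ord_null_lmerge => r /AP[].
- by apply: ord_sum_to_lmerge => r /AP[].
- by apply: ord_norm_eq_lmerge => r /AP[].
move=> a' a'0 ga'b; apply: funext => n; rewrite -(lmerge_split (a' n)).
apply: lmerge_ext => r ltrN; have [_ _ _ Auniq] := AP r ltrN.
by rewrite -(Auniq _ (ord_null_lsplit ltrN a'0) (ord_sum_to_lsplit ltrN ga'b)).
Qed.

End PowerMap.

End ResidueSplit.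

Theorem proposition2 (F : finFieldType) (X : topologicalType)
  (cX : compact [set: X]) (hX : hausdorff_space X)
  (tdX : totally_disconnected [set: X])
  (f : nat -> X -> laurent F) :
  orthonormal_basis 1 f ->
  forall m : nat, (0 < m)%N ->
    orthonormal_basis 1 (fun n x => lpow (f n x) (#|F| ^ m)) /\
    orthonormal_basis (#|F| ^ m) (fun n x => lroot m (f n x)).
Proof.
move=> fON m _; have [x0] := orthonormal_basis_inhabited fON.
have q_gt0 := card_exp_gt0 F m.
have /(orthonormal_basisE (ltn0Sn 0) x0) f_ord := fON.
split.
  apply/(orthonormal_basisE (ltn0Sn 0) x0).
  under eq_fun => n do under eq_fun => x do rewrite lpowE.
  by move: (ord_basis_expr q_gt0 (@lembed_card_exp F m) f_ord).
under eq_fun => n do under eq_fun => x do rewrite lrootE.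
exact/(orthonormal_basisE q_gt0 x0).
Qed.
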